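(* Let $S$ be a set of $n=5$ points all lying on a circle $\Gamma$ with center $O$, such that $\Gamma=$ SEC$(S)$, no two points of $S$ are antipodal on $\Gamma$, and no isometry of the plane other than the identity maps $S$ onto itself. Then there exist distinct $p,q\in S$ such that SED$(S\setminus\{p\})=$ SED$(S)$ and the antipodal point $q'$ of $q$ on $\Gamma$ lies in the open arc of $\Gamma$ that contains $p$ and whose endpoints are the two points of $S$ adjacent to $p$ in the cyclic order around $O$.
   Context: SED$(X)$ is the smallest closed disk containing a finite set $X$, and SEC$(X)$ is its boundary circle. Two points of $\Gamma$ are antipodal if the segment joining them passes through $O$. *)

From Stdlib Require Import Reals List.
Open Scope R_scope.

Definition pt : Type := (R * R)%type.

Definition dist2 (x y : pt) : R :=
  (fst x - fst y) ^ 2 + (snd x - snd y) ^ 2.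

Definition pdist (x y : pt) : R := sqrt (dist2 x y).

Definition encloses (X : pt -> Prop) (c : pt) (r : R) : Prop :=
  0 <= r /\ forall x, X x -> pdist x c <= r.

(* (c, r) is SED(X): an enclosing closed disk of minimum radius.
   (SED(X) is unique, so "SED(Y) = SED(X)" is expressed as: the disk
   SED(X) is a smallest enclosing disk of Y.) *)
Definition is_SED (X : pt -> Prop) (c : pt) (r : R) : Prop :=
  encloses X c r /\ forall c' r', encloses X c' r' -> r <= r'.

Definition setof (S : list pt) : pt -> Prop := fun x => In x S.

Definition setminus1 (S : list pt) (p : pt) : pt -> Prop :=
  fun x => In x S /\ x <> p.

Definition on_segment (O x y : pt) : Prop :=
  exists t, 0 <= t <= 1 /\
    O = ((1 - t) * fst x + t * fst y, (1 - t) * snd x + t * snd y).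

(* x, y on Gamma are antipodal: the segment joining them passes through O. *)
Definition antipodal (O x y : pt) : Prop := on_segment O x y.

Definition antipode (O q : pt) : pt := (2 * fst O - fst q, 2 * snd O - snd q).

Definition isometry (f : pt -> pt) : Prop :=
  forall x y, pdist (f x) (f y) = pdist x y.

Definition maps_onto_itself (f : pt -> pt) (S : list pt) : Prop :=
  (forall x, In x S -> In (f x) S) /\
  (forall y, In y S -> exists x, In x S /\ f x = y).

Definition cross (a b x : pt) : R :=
  (fst b - fst a) * (snd x - snd a) - (snd b - snd a) * (fst x - fst a).

(* x lies on the open arc of the circle (center O, radius r) with
   endpoints a and b that contains p: x is on the circle and strictly on
   the same side of the chord ab as p. *)
Definition in_open_arc (O : pt) (r : R) (a b p x : pt) : Prop :=
  pdist x O = r /\ 0 < cross a b x * cross a b p.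

(* a and b are the two points of S adjacent to p in the cyclic order
   around O: they are distinct points of S other than p, and the open arc
   with endpoints a, b containing p contains no point of S other than p. *)
Definition adjacent_pair (S : list pt) (O : pt) (r : R) (p a b : pt) : Prop :=
  In a S /\ In b S /\ a <> p /\ b <> p /\ a <> b /\
  forall s, In s S -> in_open_arc O r a b p s -> s = p.

(* Write the points of S as P t1, ..., P t5 with t1 < ... < t5 < t1 + 2 PI.  Since the
   circle is SED(S), every gap between consecutive points is less than PI (otherwise S lies
   in an arc shorter than a half circle, and pushing the centre towards it shrinks the
   disk), and no diagonal P ti P t(i+2) subtends exactly PI.  Two diagonals sharing an
   endpoint cannot both subtend more than PI, and a counting argument then yields a short
   diagonal P t1 P t3 together with a short diagonal sharing an endpoint with it, say
   P t3 P t5.  Then p = P t2 and q = P t5 work: P t1 P t3 P t5 is an acute triangle, so it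
   still forces radius r, and the antipode of P t5 lies between P t1 and P t3. *)

From Stdlib Require Import Reals List Lra Lia Psatz Sorted Permutation.
Open Scope R_scope.

Lemma sin_sum_of_doubles u w :
  sin (2*u) + sin (2*w) - sin (2*u + 2*w) = 4 * sin u * sin w * sin (u + w).
Proof.
  rewrite sin_plus with (x := 2*u), !sin_2a, !cos_2a, sin_plus.
  pose proof (sin2_cos2 u) as Hu; pose proof (sin2_cos2 w) as Hw; unfold Rsqr in *.
  apply Rminus_diag_uniq.
  transitivity (2 * sin u * cos u * (1 - (sin w * sin w + cos w * cos w))
                + 2 * sin w * cos w * (1 - (sin u * sin u + cos u * cos u))); [ring|].
  rewrite Hu, Hw; ring.
Qed.

Lemma list_pos_lower_bound {A} (f : A -> R) (l : list A) :
  (forall x, In x l -> 0 < f x) -> exists m, 0 < m /\ forall x, In x l -> m <= f x.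
Proof.
  induction l as [|a l IH]; intros Hpos.
  - exists 1; split; [lra | intros x []].
  - destruct IH as [m [Hm Hle]]; [intros x Hx; apply Hpos; right; exact Hx|].
    exists (Rmin (f a) m); split.
    + apply Rmin_pos; [apply Hpos; left|]; auto.
    + intros x [<-|Hx]; [apply Rmin_l | eapply Rle_trans; [apply Rmin_r | auto]].
Qed.

Lemma dist2_ge0 x y : 0 <= dist2 x y.
Proof.
  unfold dist2; pose proof (pow2_ge_0 (fst x - fst y)); pose proof (pow2_ge_0 (snd x - snd y)).
  lra.
Qed.

Lemma dist2_eq0 x y : dist2 x y = 0 -> x = y.
Proof.
  unfold dist2; intros H.
  pose proof (pow2_ge_0 (fst x - fst y)); pose proof (pow2_ge_0 (snd x - snd y)).
  apply injective_projections; nra.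
Qed.

Lemma dist2_le_of_pdist_le x c r' : pdist x c <= r' -> dist2 x c <= r'^2.
Proof.
  unfold pdist; intros H.
  pose proof (sqrt_pos (dist2 x c)); pose proof (sqrt_sqrt _ (dist2_ge0 x c)); nra.
Qed.

Lemma dist2_of_pdist x c r' : pdist x c = r' -> dist2 x c = r'^2.
Proof. unfold pdist; intros <-; rewrite pow2_sqrt; [reflexivity | apply dist2_ge0]. Qed.

Lemma cross_swap x y z : cross x y z = - cross x z y.
Proof. unfold cross; ring. Qed.

Lemma cross_eq_l x y : cross x y x = 0.
Proof. unfold cross; ring. Qed.

Lemma cross_eq_r x y : cross x y y = 0.
Proof. unfold cross; ring. Qed.

Lemma cross_same x z : cross x x z = 0.
Proof. unfold cross; ring. Qed.

Section SortByKey.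
Variables (A : Type) (key : A -> R).

Lemma insert_sorted_by_key x l :
  StronglySorted (fun a b => key a <= key b) l ->
  exists l', Permutation l' (x :: l) /\ StronglySorted (fun a b => key a <= key b) l'.
Proof.
  induction l as [|a l IH]; intros Hl.
  - exists (x :: nil); split; [reflexivity | repeat constructor].
  - apply StronglySorted_inv in Hl as [Hl Ha].
    destruct (Rle_dec (key x) (key a)) as [Hxa|Hax].
    + exists (x :: a :: l); split; [reflexivity|].
      constructor; [constructor; assumption|].
      constructor; [exact Hxa|].
      eapply Forall_impl; [|exact Ha]; intros b Hb; lra.
    + destruct (IH Hl) as [l' [Hperm Hl']].
      exists (a :: l'); split.
      * transitivity (a :: x :: l); [apply perm_skip, Hperm | apply perm_swap].
      * constructor; [exact Hl'|].
        apply (Permutation_Forall (Permutation_sym Hperm)).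
        constructor; [lra | exact Ha].
Qed.

Lemma sorted_permutation_by_key l :
  exists l', Permutation l' l /\ StronglySorted (fun a b => key a <= key b) l'.
Proof.
  induction l as [|x l [l' [Hperm Hl']]].
  - exists nil; split; constructor.
  - destruct (insert_sorted_by_key x l' Hl') as [l'' [Hperm' Hl'']].
    exists l''; split; [|exact Hl''].
    transitivity (x :: l'); [exact Hperm' | apply perm_skip, Hperm].
Qed.

End SortByKey.

Section Circle.
Variables (O : pt) (r : R).

Definition circle_pt (t : R) : pt := (fst O + r * cos t, snd O + r * sin t).

Lemma circle_pt_add_2PI t : circle_pt (t + 2*PI) = circle_pt t.
Proof. unfold circle_pt; rewrite cos_plus, sin_plus, cos_2PI, sin_2PI; f_equal; ring. Qed.

Lemma antipode_circle_pt t : antipode O (circle_pt t) = circle_pt (t - PI).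
Proof.
  unfold antipode, circle_pt; cbn [fst snd].
  rewrite cos_minus, sin_minus, cos_PI, sin_PI; f_equal; ring.
Qed.

Lemma antipodal_circle_pt t : antipodal O (circle_pt t) (circle_pt (t + PI)).
Proof.
  exists (1/2); split; [lra|].
  unfold circle_pt; cbn [fst snd]; rewrite neg_cos, neg_sin.
  apply injective_projections; cbn [fst snd]; field.
Qed.

Lemma dist2_circle_pt t c :
  dist2 (circle_pt t) c
  = r^2 - 2 * r * (cos t * (fst c - fst O) + sin t * (snd c - snd O)) + dist2 c O.
Proof.
  unfold dist2, circle_pt; cbn [fst snd].
  pose proof (sin2_cos2 t) as H; unfold Rsqr in H; nra.
Qed.

Lemma pdist_circle_pt t : 0 <= r -> pdist (circle_pt t) O = r.
Proof.
  intros hr; unfold pdist; rewrite dist2_circle_pt.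
  replace (r ^ 2 - 2 * r * (cos t * (fst O - fst O) + sin t * (snd O - snd O)) + dist2 O O)
    with (r ^ 2) by (unfold dist2; ring).
  apply sqrt_pow2; exact hr.
Qed.

Lemma cross_circle_pt a b c :
  cross (circle_pt a) (circle_pt b) (circle_pt c)
  = r^2 * (sin (b - a) + sin (c - b) - sin (c - a)).
Proof. unfold cross, circle_pt; cbn [fst snd]; rewrite !sin_minus; ring. Qed.

Hypothesis r_pos : 0 < r.

Lemma cross_circle_pt_pos a b c :
  a < b -> b < c -> c < a + 2*PI -> 0 < cross (circle_pt a) (circle_pt b) (circle_pt c).
Proof.
  intros hab hbc hca; rewrite cross_circle_pt.
  pose proof PI_RGT_0.
  replace (sin (b - a) + sin (c - b) - sin (c - a)) with
    (sin (2*((b-a)/2)) + sin (2*((c-b)/2)) - sin (2*((b-a)/2) + 2*((c-b)/2)))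
    by (f_equal; [f_equal; f_equal | f_equal]; field).
  rewrite sin_sum_of_doubles.
  assert (0 < sin ((b-a)/2)) by (apply sin_gt_0; lra).
  assert (0 < sin ((c-b)/2)) by (apply sin_gt_0; lra).
  assert (0 < sin ((b-a)/2 + (c-b)/2)) by (apply sin_gt_0; lra).
  apply Rmult_lt_0_compat; [nra|].
  repeat apply Rmult_lt_0_compat; lra.
Qed.

Lemma circle_pt_neq a b : a < b -> b < a + 2*PI -> circle_pt a <> circle_pt b.
Proof.
  intros hab hba E.
  pose proof (cross_circle_pt_pos a b ((b + a + 2*PI)/2) hab ltac:(lra) ltac:(lra)) as H.
  rewrite <- E, cross_same in H; lra.
Qed.

Definition circle_angle (x : pt) : R :=
  if Rle_dec 0 (snd x - snd O) then acos ((fst x - fst O) / r)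
  else 2*PI - acos ((fst x - fst O) / r).

Lemma circle_angle_spec x :
  pdist x O = r -> x = circle_pt (circle_angle x) /\ 0 <= circle_angle x < 2*PI.
Proof.
  intros Hx; apply dist2_of_pdist in Hx; unfold circle_angle.
  set (u := (fst x - fst O) / r); set (v := (snd x - snd O) / r).
  assert (Huv : u^2 + v^2 = 1).
  { replace (u^2 + v^2) with (dist2 x O / r^2) by (unfold u, v, dist2; field; lra).
    rewrite Hx; field; lra. }
  assert (Hx1 : fst x = fst O + r * u) by (unfold u; field; lra).
  assert (Hx2 : snd x = snd O + r * v) by (unfold v; field; lra).
  assert (Hv2 : 1 - u² = v²) by (unfold Rsqr; lra).
  pose proof PI_RGT_0.
  destruct (Rle_dec 0 (snd x - snd O)) as [Hv|Hv].
  - assert (0 <= v) by (unfold v; apply Rle_mult_inv_pos; lra).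
    split; [|pose proof (acos_bound u); lra].
    unfold circle_pt; apply injective_projections; cbn [fst snd].
    + rewrite cos_acos; nra.
    + rewrite sin_acos, Hv2, sqrt_Rsqr; nra.
  - assert (v < 0) by (unfold v; apply Rdiv_neg_pos; lra).
    split; [|pose proof (acos_bound_lt u); nra].
    unfold circle_pt; apply injective_projections; cbn [fst snd].
    + rewrite cos_minus, cos_2PI, sin_2PI, cos_acos; nra.
    + rewrite sin_minus, cos_2PI, sin_2PI, sin_acos, Hv2, Rsqr_neg, sqrt_Rsqr; nra.
Qed.

(* Moving the centre a little towards the open half-plane gives a smaller enclosing disk. *)
Lemma is_SED_not_in_open_halfplane S s0 u1 u2 :
  is_SED (setof S) O r -> In s0 S -> u1^2 + u2^2 = 1 ->
  ~ (forall s, In s S -> 0 < (fst s - fst O) * u1 + (snd s - snd O) * u2).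
Proof.
  intros [[_ Henc] Hmin] Hs0 Hu Hpos.
  destruct (list_pos_lower_bound _ S Hpos) as [m [Hm Hle]].
  set (c := (fst O + m * u1, snd O + m * u2)).
  assert (Hc : forall s, In s S -> dist2 s c <= r^2 - m^2).
  { intros s Hs.
    pose proof (dist2_le_of_pdist_le _ _ _ (Henc s Hs)) as HsO; specialize (Hle s Hs).
    unfold dist2, c in *; cbn [fst snd] in *; nra. }
  assert (Hm2 : 0 <= r^2 - m^2) by (pose proof (dist2_ge0 s0 c); pose proof (Hc s0 Hs0); lra).
  assert (Hr : r <= sqrt (r^2 - m^2)).
  { apply (Hmin c); split; [apply sqrt_pos|].
    intros x Hx; apply sqrt_le_1_alt, Hc, Hx. }
  assert (sqrt (r^2 - m^2) < sqrt (r^2)) by (apply sqrt_lt_1_alt; split; nra).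
  rewrite sqrt_pow2 in * by lra; lra.
Qed.

Lemma is_SED_not_in_short_arc S s0 lo w :
  is_SED (setof S) O r -> In s0 S -> w < PI ->
  ~ (forall s, In s S -> exists t, s = circle_pt t /\ lo <= t <= lo + w).
Proof.
  intros HS Hs0 Hw Harc.
  apply (is_SED_not_in_open_halfplane S s0 (cos (lo + w/2)) (sin (lo + w/2)) HS Hs0).
  - pose proof (sin2_cos2 (lo + w/2)) as H; unfold Rsqr in H; lra.
  - intros s Hs; destruct (Harc s Hs) as [t [-> Ht]]; unfold circle_pt; cbn [fst snd].
    replace ((fst O + r * cos t - fst O) * cos (lo + w/2)
             + (snd O + r * sin t - snd O) * sin (lo + w/2))
      with (r * cos (t - (lo + w/2))) by (rewrite cos_minus; ring).
    apply Rmult_lt_0_compat; [exact r_pos | apply cos_gt_0; lra].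
Qed.

(* O is the combination of the vertices with the positive weights sin of the opposite arcs,
   so the weighted mean of the squared distances to any c' is r^2 + |c' - O|^2. *)
Lemma enclosing_acute_triangle_radius a b c c' r' :
  a < b -> b < c -> c < a + 2*PI -> b - a < PI -> c - b < PI -> a + 2*PI - c < PI ->
  0 <= r' -> pdist (circle_pt a) c' <= r' -> pdist (circle_pt b) c' <= r' ->
  pdist (circle_pt c) c' <= r' -> r <= r'.
Proof.
  intros hab hbc hca Hab Hbc Hca hr' Da Db Dc.
  apply dist2_le_of_pdist_le in Da, Db, Dc; rewrite dist2_circle_pt in Da, Db, Dc.
  pose proof PI_RGT_0.
  assert (Wa : 0 < sin (c - b)) by (apply sin_gt_0; lra).
  assert (Wc : 0 < sin (b - a)) by (apply sin_gt_0; lra).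
  assert (Wb : 0 < sin (a - c))
    by (rewrite <- (sin_period (a - c) 1); apply sin_gt_0; simpl; lra).
  assert (Ix : sin (c - b) * cos a + sin (a - c) * cos b + sin (b - a) * cos c = 0)
    by (rewrite !sin_minus; ring).
  assert (Iy : sin (c - b) * sin a + sin (a - c) * sin b + sin (b - a) * sin c = 0)
    by (rewrite !sin_minus; ring).
  pose proof (dist2_ge0 c' O).
  set (v1 := fst c' - fst O) in *; set (v2 := snd c' - snd O) in *.
  set (wa := sin (c - b)) in *; set (wb := sin (a - c)) in *; set (wc := sin (b - a)) in *.
  assert (Hmean : (wa + wb + wc) * (r^2 + dist2 c' O) <= (wa + wb + wc) * r'^2).
  { transitivity
      (wa * (r^2 - 2 * r * (cos a * v1 + sin a * v2) + dist2 c' O)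
       + wb * (r^2 - 2 * r * (cos b * v1 + sin b * v2) + dist2 c' O)
       + wc * (r^2 - 2 * r * (cos c * v1 + sin c * v2) + dist2 c' O)).
    - right. transitivity ((wa + wb + wc) * (r^2 + dist2 c' O)
        - 2 * r * v1 * (wa * cos a + wb * cos b + wc * cos c)
        - 2 * r * v2 * (wa * sin a + wb * sin b + wc * sin c)); [rewrite Ix, Iy|]; ring.
    - nra. }
  apply Rmult_le_reg_l in Hmean; [nra | lra].
Qed.

End Circle.

(* For the pentagon with vertex angles t1 < ... < t5, the diagonal from ti to t(i+2) is
   short when the arc it cuts off through t(i+1) is less than PI. *)
Definition short_diagonal_pair (t1 t2 t3 t4 t5 : R) : Prop :=
  t3 - t1 < PI /\ (t5 - t3 < PI \/ t1 + 2*PI - t4 < PI).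

Ltac pick_disjunct :=
  solve [ lra | split; pick_disjunct | left; pick_disjunct | right; pick_disjunct ].

(* The arcs cut off by two diagonals sharing an endpoint sum with the remaining gap to 2 PI,
   so at most two diagonals are long; among the at least three short ones, two share an
   endpoint. *)
Lemma pentagon_short_diagonal_pair t1 t2 t3 t4 t5 :
  t1 < t2 /\ t2 < t3 /\ t3 < t4 /\ t4 < t5 /\ t5 < t1 + 2*PI ->
  t3 - t1 <> PI -> t4 - t2 <> PI -> t5 - t3 <> PI ->
  t1 + 2*PI - t4 <> PI -> t2 + 2*PI - t5 <> PI ->
  short_diagonal_pair t1 t2 t3 t4 t5 \/
  short_diagonal_pair t2 t3 t4 t5 (t1 + 2*PI) \/
  short_diagonal_pair t3 t4 t5 (t1 + 2*PI) (t2 + 2*PI) \/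
  short_diagonal_pair t4 t5 (t1 + 2*PI) (t2 + 2*PI) (t3 + 2*PI) \/
  short_diagonal_pair t5 (t1 + 2*PI) (t2 + 2*PI) (t3 + 2*PI) (t4 + 2*PI).
Proof.
  unfold short_diagonal_pair; intros Hord N1 N2 N3 N4 N5.
  destruct (Rtotal_order (t3 - t1) PI) as [?|[?|?]]; try contradiction;
  destruct (Rtotal_order (t4 - t2) PI) as [?|[?|?]]; try contradiction;
  destruct (Rtotal_order (t5 - t3) PI) as [?|[?|?]]; try contradiction;
  destruct (Rtotal_order (t1 + 2*PI - t4) PI) as [?|[?|?]]; try contradiction;
  destruct (Rtotal_order (t2 + 2*PI - t5) PI) as [?|[?|?]]; try contradiction;
  pick_disjunct.
Qed.

Lemma circle_radius_pos (O : pt) (r : R) (S : list pt) :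
  NoDup S -> (2 <= length S)%nat -> (forall x, In x S -> pdist x O = r) -> 0 < r.
Proof.
  intros HND Hlen Hon.
  destruct S as [|x [|y S]]; simpl in Hlen; [lia | lia |].
  apply NoDup_cons_iff in HND as [Hxy _].
  pose proof (Hon x (or_introl eq_refl)) as Hx.
  pose proof (Hon y (or_intror (or_introl eq_refl))) as Hy.
  assert (Hr : 0 <= r) by (rewrite <- Hx; apply sqrt_pos).
  destruct (Rle_lt_or_eq_dec _ _ Hr) as [|<-]; [assumption|].
  apply dist2_of_pdist in Hx, Hy; rewrite pow_i in Hx, Hy by lia.
  apply dist2_eq0 in Hx, Hy; subst x y.
  exfalso; apply Hxy; left; reflexivity.
Qed.

Section Pentagon.
Variables (O : pt) (r : R) (S : list pt).
Hypothesis r_pos : 0 < r.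

Local Notation P := (circle_pt O r).

Definition inscribed5 (t1 t2 t3 t4 t5 : R) : Prop :=
  (t1 < t2 /\ t2 < t3 /\ t3 < t4 /\ t4 < t5 /\ t5 < t1 + 2*PI) /\
  forall s, In s S <-> s = P t1 \/ s = P t2 \/ s = P t3 \/ s = P t4 \/ s = P t5.

Lemma inscribed5_rotate t1 t2 t3 t4 t5 :
  inscribed5 t1 t2 t3 t4 t5 -> inscribed5 t2 t3 t4 t5 (t1 + 2*PI).
Proof.
  intros [Hord Hmem]; split; [lra|].
  intros s; rewrite Hmem, circle_pt_add_2PI; tauto.
Qed.

Lemma inscribed5_exists :
  NoDup S -> length S = 5%nat -> (forall x, In x S -> pdist x O = r) ->
  exists t1 t2 t3 t4 t5, inscribed5 t1 t2 t3 t4 t5.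
Proof.
  intros HND Hlen Hon.
  destruct (sorted_permutation_by_key _ (circle_angle O r) S) as [L [Hperm Hsort]].
  assert (HmemL : forall s, In s S <-> In s L)
    by (intros s; split; apply Permutation_in; [apply Permutation_sym|]; exact Hperm).
  assert (HNDL : NoDup L) by exact (Permutation_NoDup (Permutation_sym Hperm) HND).
  apply Permutation_length in Hperm; rewrite Hlen in Hperm.
  destruct L as [|y1 [|y2 [|y3 [|y4 [|y5 [|]]]]]]; try discriminate.
  assert (Hspec : forall y, In y S -> y = P (circle_angle O r y) /\ 0 <= circle_angle O r y < 2*PI)
    by (intros y Hy; exact (circle_angle_spec O r r_pos y (Hon y Hy))).
  assert (Hlt : forall y y', In y S -> In y' S -> y <> y' ->
            circle_angle O r y <= circle_angle O r y' -> circle_angle O r y < circle_angle O r y').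
  { intros y y' Hy Hy' Hne Hle; destruct (Rle_lt_or_eq_dec _ _ Hle) as [|E]; [assumption|].
    exfalso; apply Hne.
    rewrite (proj1 (Hspec y Hy)), (proj1 (Hspec y' Hy')), E; reflexivity. }
  apply StronglySorted_Sorted, Sorted_LocallySorted_iff in Hsort.
  repeat match goal with H : LocallySorted _ (_ :: _ :: _) |- _ => inversion H; clear H end.
  rewrite !NoDup_cons_iff in HNDL; cbn [In] in HNDL.
  assert (I1 : In y1 S) by (apply HmemL; simpl; tauto).
  assert (I2 : In y2 S) by (apply HmemL; simpl; tauto).
  assert (I3 : In y3 S) by (apply HmemL; simpl; tauto).
  assert (I4 : In y4 S) by (apply HmemL; simpl; tauto).
  assert (I5 : In y5 S) by (apply HmemL; simpl; tauto).
  exists (circle_angle O r y1), (circle_angle O r y2), (circle_angle O r y3),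
    (circle_angle O r y4), (circle_angle O r y5); split.
  - pose proof (Hspec y1 I1); pose proof (Hspec y5 I5).
    repeat split; [apply Hlt; auto; intro; subst; tauto .. | lra].
  - intros s; rewrite HmemL, <- (proj1 (Hspec y1 I1)), <- (proj1 (Hspec y2 I2)),
      <- (proj1 (Hspec y3 I3)), <- (proj1 (Hspec y4 I4)), <- (proj1 (Hspec y5 I5)).
    simpl; intuition congruence.
Qed.

Hypothesis S_SED : is_SED (setof S) O r.
Hypothesis S_no_antipodes : forall x y, In x S -> In y S -> x <> y -> ~ antipodal O x y.

Lemma inscribed5_last_gap t1 t2 t3 t4 t5 :
  inscribed5 t1 t2 t3 t4 t5 -> t1 + 2*PI - t5 < PI.
Proof.
  intros [Hord Hmem].
  assert (I1 : In (P t1) S) by (apply Hmem; tauto).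
  destruct (Rtotal_order (t1 + 2*PI - t5) PI) as [|[E|Hgt]]; [assumption | exfalso ..].
  - apply (S_no_antipodes (P t1) (P t5) I1); [apply Hmem; tauto | apply circle_pt_neq; lra |].
    replace t5 with (t1 + PI) by lra; apply antipodal_circle_pt.
  - apply (is_SED_not_in_short_arc O r r_pos S (P t1) t1 (t5 - t1) S_SED I1); [lra|].
    intros s Hs; apply Hmem in Hs as [->|[->|[->|[->| ->]]]];
      [exists t1 | exists t2 | exists t3 | exists t4 | exists t5];
      (split; [reflexivity | split; lra]).
Qed.

Lemma inscribed5_diagonal_ne_PI t1 t2 t3 t4 t5 :
  inscribed5 t1 t2 t3 t4 t5 -> t3 - t1 <> PI.
Proof.
  intros [Hord Hmem] E.
  apply (S_no_antipodes (P t1) (P t3)); [apply Hmem; tauto .. | apply circle_pt_neq; lra |].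
  replace t3 with (t1 + PI) by lra; apply antipodal_circle_pt.
Qed.

Ltac circle_pts_distinct :=
  first [apply circle_pt_neq; lra | apply not_eq_sym, circle_pt_neq; lra].

(* P t1, P t3, P u is an acute triangle; the antipode P (u - PI) of q = P u falls between
   t1 and t3. *)
Lemma inscribed5_short_diagonal_witness t1 t2 t3 t4 t5 u :
  inscribed5 t1 t2 t3 t4 t5 -> t3 - t1 < PI -> (u = t4 \/ u = t5) ->
  u - t3 < PI -> t1 + 2*PI - u < PI ->
  exists p q, In p S /\ In q S /\ p <> q /\
    is_SED (setminus1 S p) O r /\
    exists a b, adjacent_pair S O r p a b /\ in_open_arc O r a b p (antipode O q).
Proof.
  intros [Hord Hmem] H13 Hu Hu3 Hu1.
  assert (Hu_range : t3 < u /\ u < t1 + 2*PI) by (destruct Hu; subst u; lra).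
  assert (Hin : forall t, t = t1 \/ t = t2 \/ t = t3 \/ t = u -> In (P t) S)
    by (intros t Ht; apply Hmem; intuition (subst; tauto)).
  assert (Hon : forall x, In x S -> pdist x O = r)
    by (intros x Hx; apply Hmem in Hx as [->|[->|[->|[->| ->]]]]; apply pdist_circle_pt; lra).
  assert (Hright : cross (P t1) (P t3) (P t2) < 0)
    by (rewrite cross_swap; pose proof (cross_circle_pt_pos O r r_pos t1 t2 t3); lra).
  assert (H4 : 0 < cross (P t1) (P t3) (P t4)) by (apply cross_circle_pt_pos; lra).
  assert (H5 : 0 < cross (P t1) (P t3) (P t5)) by (apply cross_circle_pt_pos; lra).
  assert (Hq : cross (P t1) (P t3) (P (u - PI)) < 0)
    by (rewrite cross_swap; pose proof (cross_circle_pt_pos O r r_pos t1 (u - PI) t3); lra).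
  exists (P t2), (P u); repeat split; auto.
  - circle_pts_distinct.
  - lra.
  - intros x [Hx _]; rewrite (Hon x Hx); lra.
  - intros c' r' [Hr' Henc].
    apply (enclosing_acute_triangle_radius O r r_pos t1 t3 u c' r'); try lra;
      apply Henc; (split; [apply Hin; tauto | circle_pts_distinct]).
  - exists (P t1), (P t3); repeat split; auto; try circle_pts_distinct.
    + intros s Hs [_ Harc].
      apply Hmem in Hs as [->|[->|[->|[->| ->]]]]; [| reflexivity |..]; exfalso;
        rewrite ?cross_eq_l, ?cross_eq_r in Harc; nra.
    + rewrite antipode_circle_pt; apply pdist_circle_pt; lra.
    + rewrite antipode_circle_pt; nra.
Qed.

Lemma inscribed5_short_diagonal_pair t1 t2 t3 t4 t5 :
  inscribed5 t1 t2 t3 t4 t5 -> short_diagonal_pair t1 t2 t3 t4 t5 ->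
  exists p q, In p S /\ In q S /\ p <> q /\
    is_SED (setminus1 S p) O r /\
    exists a b, adjacent_pair S O r p a b /\ in_open_arc O r a b p (antipode O q).
Proof.
  intros H [H13 [H35 | H41]].
  - apply (inscribed5_short_diagonal_witness t1 t2 t3 t4 t5 t5); auto.
    exact (inscribed5_last_gap _ _ _ _ _ H).
  - apply (inscribed5_short_diagonal_witness t1 t2 t3 t4 t5 t4); auto.
    (* the gap t4 - t3, as the last gap after three rotations *)
    pose proof (inscribed5_last_gap _ _ _ _ _
      (inscribed5_rotate _ _ _ _ _ (inscribed5_rotate _ _ _ _ _ (inscribed5_rotate _ _ _ _ _ H)))).
    lra.
Qed.

End Pentagon.

Theorem lemma5p36 (S : list pt) (O : pt) (r : R) :
  NoDup S -> length S = 5%nat ->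
  (forall x, In x S -> pdist x O = r) ->
  is_SED (setof S) O r ->
  (forall x y, In x S -> In y S -> x <> y -> ~ antipodal O x y) ->
  (forall f, isometry f -> maps_onto_itself f S -> forall x, f x = x) ->
  exists p q, In p S /\ In q S /\ p <> q /\
    is_SED (setminus1 S p) O r /\
    exists a b, adjacent_pair S O r p a b /\
      in_open_arc O r a b p (antipode O q).
Proof.
  intros HND Hlen Hon HSED Hanti _.
  assert (hr : 0 < r) by (apply (circle_radius_pos O r S HND); [lia | exact Hon]).
  destruct (inscribed5_exists O r S hr HND Hlen Hon) as (t1 & t2 & t3 & t4 & t5 & H1).
  pose proof (inscribed5_rotate _ _ _ _ _ _ _ _ H1) as H2.
  pose proof (inscribed5_rotate _ _ _ _ _ _ _ _ H2) as H3.
  pose proof (inscribed5_rotate _ _ _ _ _ _ _ _ H3) as H4.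
  pose proof (inscribed5_rotate _ _ _ _ _ _ _ _ H4) as H5.
  pose proof (inscribed5_diagonal_ne_PI O r S hr Hanti) as Hne.
  pose proof (inscribed5_short_diagonal_pair O r S hr HSED Hanti) as Hconcl.
  destruct (pentagon_short_diagonal_pair t1 t2 t3 t4 t5 (proj1 H1)
    (Hne _ _ _ _ _ H1) (Hne _ _ _ _ _ H2) (Hne _ _ _ _ _ H3) (Hne _ _ _ _ _ H4) (Hne _ _ _ _ _ H5))
    as [G|[G|[G|[G|G]]]];
    [ exact (Hconcl _ _ _ _ _ H1 G) | exact (Hconcl _ _ _ _ _ H2 G) | exact (Hconcl _ _ _ _ _ H3 G)
    | exact (Hconcl _ _ _ _ _ H4 G) | exact (Hconcl _ _ _ _ _ H5 G) ].
Qed.
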